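(* Let $R$ be a binary relation on a set $A$. If $\mathbf{WN}(R)$ and $\mathbf{UN}^{\to}(R)$ hold, then $\mathbf{BP}(R)$ holds: every $R$-increasing sequence is bounded. (Constructively.)
   Context: Work in constructive (intuitionistic) logic / Martin-Löf type theory without excluded middle or other axioms. Let $R$ be a binary relation on $A$; write $a\to b$ for $R\,a\,b$, $\to^*$ for its reflexive–transitive closure, $\equiv$ for identity. $a\in\mathrm{NF}$ iff there is no $b$ with $a\to b$. $\mathbf{WN}(R)$: every $a\in A$ has some $b\in\mathrm{NF}$ with $a\to^* b$. $\mathbf{UN}^{\to}(R)$: for all $a\in A$ and $b,c\in\mathrm{NF}$, $a\to^* b$ and $a\to^* c$ imply $b\equiv c$. A sequence $s:\mathbb{N}\to A$ is $R$-increasing if $s(k)\to s(k+1)$ for all $k$; it is bounded if there is $b\in A$ with $s(i)\to^* b$ for all $i$. $\mathbf{BP}(R)$: every $R$-increasing sequence is bounded. *)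

From Stdlib Require Import Relations.Relation_Operators.

Section Rewriting.
Variable A : Type.
Variable R : A -> A -> Prop.

Definition rstar : A -> A -> Prop := clos_refl_trans A R.

Definition NF (a : A) : Prop := ~ (exists b, R a b).

Definition WN : Prop := forall a : A, exists b, NF b /\ rstar a b.

Definition UN_to : Prop :=
  forall a b c : A, NF b -> NF c -> rstar a b -> rstar a c -> b = c.

Definition increasing (s : nat -> A) : Prop := forall k, R (s k) (s (S k)).

Definition bounded (s : nat -> A) : Prop := exists b, forall i, rstar (s i) b.

Definition BP : Prop := forall s : nat -> A, increasing s -> bounded s.
End Rewriting.

(* The first term [s 0] of an increasing sequence reaches every later term, so
   by [UN_to] the normal forms that [WN] provides for the terms all coincide
   with one normal form [b] of [s 0]; this [b] bounds the sequence. *)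
From Stdlib Require Import Relations.Relation_Operators.

Section IncreasingSequences.
Variable A : Type.
Variable R : A -> A -> Prop.

Lemma increasing_rstar_from_head (s : nat -> A) :
  increasing A R s -> forall i, rstar A R (s 0) (s i).
Proof.
  intros Hs i. induction i as [|i IH].
  - apply rt_refl.
  - apply rt_trans with (s i); [exact IH | apply rt_step, Hs].
Qed.

Lemma UN_to_nf_rstar (a a' b b' : A) :
  UN_to A R -> NF A R b -> NF A R b' ->
  rstar A R a a' -> rstar A R a b -> rstar A R a' b' -> b' = b.
Proof.
  intros un Hb Hb' Haa' Hab Hab'.
  apply (un a b' b Hb' Hb); [apply rt_trans with a' |]; assumption.
Qed.

End IncreasingSequences.

Theorem theorem1p2p3 (A : Type) (R : A -> A -> Prop) :
  WN A R -> UN_to A R -> BP A R.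
Proof.
  intros wn un s Hs.
  destruct (wn (s 0)) as [b [Hb Hsb]].
  exists b. intros i.
  destruct (wn (s i)) as [c [Hc Hsc]].
  assert (c = b) as ->.
  { apply (UN_to_nf_rstar A R (s 0) (s i)); try assumption.
    apply increasing_rstar_from_head, Hs. }
  exact Hsc.
Qed.
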